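(* Under the standing setup and the algorithm/assumptions described in the context, there exists a constant $\chi>0$ such that for every pair of integers $1\le\underline{k}\le\overline{k}$, $$\min_{\underline{k}\le n\le\overline{k}}\mathcal{M}_{\bar\gamma}^{F_n,\phi}(x_n)\ \le\ \sqrt{\frac{\chi}{\sum_{n=\underline{k}}^{\overline{k}}\mu_n}}.$$
   Context: Standing setup: $\mathcal{X},\mathcal{Z}$ finite-dimensional real Hilbert spaces; $\phi:\mathcal{X}\to\mathbb{R}\cup\{+\infty\}$ proper lower semicontinuous convex; $h:\mathcal{X}\to\mathbb{R}$ differentiable with $\nabla h$ Lipschitz on $\mathrm{dom}\,\phi$; $\mathfrak{S}:\mathcal{X}\to\mathcal{Z}$ continuously differentiable; $g:\mathcal{Z}\to\mathbb{R}$ Lipschitz with constant $L_g>0$ and $\eta$-weakly convex ($g+\frac\eta2\|\cdot\|^2$ convex, $\eta>0$); $F:=h+g\circ\mathfrak{S}$ and $\mathrm{argmin}_x(F+\phi)\ne\emptyset$. Notation: $\mathrm{prox}_{\gamma\phi}(\bar x)=\mathrm{argmin}_x(\phi(x)+\frac1{2\gamma}\|x-\bar x\|^2)$; Moreau envelope ${}^{\mu}g(\bar z)=\min_z(g(z)+\frac1{2\mu}\|z-\bar z\|^2)$ for $\mu\in(0,\eta^{-1})$ (continuously differentiable). $F_n:=h+{}^{\mu_n}g\circ\mathfrak{S}$, and for $\gamma>0$, $\mathcal{M}_\gamma^{F_n,\phi}(x)=\|(x-\mathrm{prox}_{\gamma\phi}(x-\gamma\nabla F_n(x)))/\gamma\|$.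 Algorithm and assumptions: fix $x_1\in\mathrm{dom}\,\phi$ and $c\in(0,1)$. (a) $(\mu_n)\subset(0,\frac{1}{2\eta}]$ with $\mu_n\to0$, $\sum_n\mu_n=+\infty$, and there is $M\ge1$ with $M^{-1}\le\mu_{n+1}/\mu_n\le1$ for all $n$. (b) Each $\nabla F_n$ is Lipschitz continuous on $\mathrm{dom}\,\phi$ with constant $L_{\nabla F_n}=\varpi_1+\varpi_2\mu_n^{-1}$ for some fixed $\varpi_1\ge0$, $\varpi_2>0$. (c) Stepsizes $\gamma_n>0$ satisfy the Armijo-type condition $(F_n+\phi)(\mathrm{prox}_{\gamma_n\phi}(x_n-\gamma_n\nabla F_n(x_n)))\le(F_n+\phi)(x_n)-c\gamma_n(\mathcal{M}_{\gamma_n}^{F_n,\phi}(x_n))^2$, and there are $\beta>0$, $\bar\gamma>0$ with $\beta L_{\nabla F_n}^{-1}\le\gamma_n\le\bar\gamma$ for all $n$. (d) Iterates: $x_{n+1}=\mathrm{prox}_{\gamma_n\phi}(x_n-\gamma_n\nabla F_n(x_n))$. *)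

From HB Require Import structures.
From mathcomp Require Import all_boot all_order all_algebra.
From mathcomp Require Import all_classical all_reals all_analysis.
Set Implicit Arguments. Unset Strict Implicit. Unset Printing Implicit Defensive.
Import Order.TTheory GRing.Theory Num.Theory.
Import numFieldNormedType.Exports.
Local Open Scope classical_set_scope.
Local Open Scope ring_scope.

(* A finite-dimensional real Hilbert space is modelled (up to isometric
   isomorphism) as 'rV[R]_d with the Euclidean inner product. *)
Section Defs.
Variable R : realType.

Definition dot (d : nat) (u v : 'rV[R]_d) : R := \sum_(i < d) u 0 i * v 0 i.
Definition enorm (d : nat) (u : 'rV[R]_d) : R := Num.sqrt (dot u u).

Definition is_gradient (d : nat) (f : 'rV[R]_d -> R) (G : 'rV[R]_d -> 'rV[R]_d) :=
  forall x, differentiable f x /\ forall v, 'D_v f x = dot (G x) v.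

Definition C1 (d e : nat) (S : 'rV[R]_d -> 'rV[R]_e) :=
  (forall x, differentiable S x) /\ (forall v, continuous (fun x => 'D_v S x)).

Definition convex_fun (d : nat) (f : 'rV[R]_d -> R) :=
  forall x y : 'rV[R]_d, forall t : R, 0 <= t <= 1 ->
    f (t *: x + (1 - t) *: y) <= t * f x + (1 - t) * f y.

Definition grad_lipschitz_on (d e : nat) (A : set 'rV[R]_d) (f : 'rV[R]_d -> 'rV[R]_e) (L : R) :=
  forall x y, A x -> A y -> enorm (f x - f y) <= L * enorm (x - y).

Definition edom (d : nat) (phi : 'rV[R]_d -> \bar R) : set 'rV[R]_d :=
  [set x | phi x \is a fin_num].

Definition proper_fun (d : nat) (phi : 'rV[R]_d -> \bar R) :=
  (forall x, phi x != -oo%E) /\ (exists x, phi x \is a fin_num).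

Definition lsc_fun (d : nat) (phi : 'rV[R]_d -> \bar R) :=
  forall a : R, closed [set x | (phi x <= a%:E)%E].

Definition econvex_fun (d : nat) (phi : 'rV[R]_d -> \bar R) :=
  forall x y : 'rV[R]_d, forall t : R, 0 < t < 1 ->
    (phi ((t *: x + (1 - t) *: y)%R) <= t%:E * phi x + (1 - t)%:E * phi y)%E.

Definition is_prox (d : nat) (phi : 'rV[R]_d -> \bar R) (gamma : R) (xbar p : 'rV[R]_d) :=
  forall x, (phi p + ((2 * gamma)^-1 * enorm (p - xbar) ^+ 2)%:E
             <= phi x + ((2 * gamma)^-1 * enorm (x - xbar) ^+ 2)%:E)%E.

Definition moreau (e : nat) (g : 'rV[R]_e -> R) (mu : R) (zbar : 'rV[R]_e) : R :=
  inf (range (fun z => g z + (2 * mu)^-1 * enorm (z - zbar) ^+ 2)).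

Definition residual (d : nat) (prox : R -> 'rV[R]_d -> 'rV[R]_d)
  (gradF : 'rV[R]_d -> 'rV[R]_d) (gamma : R) (x : 'rV[R]_d) : R :=
  enorm (gamma^-1 *: (x - prox gamma (x - gamma *: gradF x))).

End Defs.

From HB Require Import structures.
From mathcomp Require Import all_boot all_order all_algebra.
From mathcomp Require Import all_classical all_reals all_analysis.
From mathcomp Require Import ring lra.
Import Order.TTheory GRing.Theory Num.Theory.
Set Implicit Arguments. Unset Strict Implicit.
Import numFieldNormedType.Exports.
Local Open Scope classical_set_scope.
Local Open Scope ring_scope.

(* A Lyapunov argument. With F_n = h + ^{mu_n}g o S, the quantity
   Phi_n = F_n(x_n) + phi(x_n) + 2 Lg^2 M mu_n drops by at least
   c gamma_n M_{gamma_n}(x_n)^2 at every step: shrinking the smoothing parameter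
   from mu_n to mu_{n+1} raises the Moreau envelope by at most
   2 Lg^2 (mu_n / mu_{n+1}) (mu_n - mu_{n+1}) <= 2 Lg^2 M (mu_n - mu_{n+1}).
   Since Phi_n >= min (F + phi) - Lg^2 / (4 eta), the drops are summable.
   The step-size bound makes gamma_n at least proportional to mu_n, and the
   prox-gradient residual is nonincreasing in the step size, so
   mu_n M_{gammabar}(x_n)^2 is a bounded multiple of the n-th drop; the minimum
   over a window is then at most the mu-weighted mean. *)

Section EuclideanNorm.
Variables (R : realType) (d : nat).
Implicit Types (a b : R) (u v w : 'rV[R]_d).

Lemma dotC u v : dot u v = dot v u.
Proof. by apply: eq_bigr => i _; rewrite mulrC. Qed.

Lemma dotDl u v w : dot (u + v) w = dot u w + dot v w.
Proof. by rewrite /dot -big_split; apply: eq_bigr => i _; rewrite mxE mulrDl. Qed.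

Lemma dotZl a u v : dot (a *: u) v = a * dot u v.
Proof. by rewrite /dot mulr_sumr; apply: eq_bigr => i _; rewrite mxE mulrA. Qed.

Lemma dotBl u v w : dot (u - v) w = dot u w - dot v w.
Proof. by rewrite -scaleN1r dotDl dotZl mulN1r. Qed.

Lemma dotDr u v w : dot w (u + v) = dot w u + dot w v.
Proof. by rewrite dotC dotDl !(dotC w). Qed.

Lemma dotZr a u v : dot v (a *: u) = a * dot v u.
Proof. by rewrite dotC dotZl dotC. Qed.

Lemma dotBr u v w : dot w (u - v) = dot w u - dot w v.
Proof. by rewrite dotC dotBl !(dotC w). Qed.

Lemma dotxx_ge0 u : 0 <= dot u u.
Proof. by apply: sumr_ge0 => i _; rewrite -expr2 sqr_ge0. Qed.

Lemma dot_sqrD u v : dot (u + v) (u + v) = dot u u + 2 * dot u v + dot v v.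
Proof. rewrite !dotDl !dotDr (dotC v u); ring. Qed.

Lemma sqr_enorm u : enorm u ^+ 2 = dot u u.
Proof. by rewrite /enorm sqr_sqrtr // dotxx_ge0. Qed.

Lemma enorm_ge0 u : 0 <= enorm u.
Proof. exact: sqrtr_ge0. Qed.

Lemma enormZ a u : enorm (a *: u) = `|a| * enorm u.
Proof. by rewrite /enorm dotZl dotZr mulrA -expr2 sqrtrM ?sqr_ge0 // sqrtr_sqr. Qed.

Lemma enorm0 : enorm (0 : 'rV[R]_d) = 0.
Proof. by rewrite -(scale0r (0 : 'rV[R]_d)) enormZ normr0 mul0r. Qed.

Lemma enorm_distC u v : enorm (u - v) = enorm (v - u).
Proof. by rewrite -opprB -scaleN1r enormZ normrN normr1 mul1r. Qed.

Lemma cauchy_schwarz_sqr u v : dot u v ^+ 2 <= dot u u * dot v v.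
Proof.
have quad a b : 0 <= a ^+ 2 * dot u u + 2 * a * b * dot u v + b ^+ 2 * dot v v.
  have := dotxx_ge0 (a *: u + b *: v).
  by rewrite dot_sqrD !dotZl !dotZr; lra.
rewrite -subr_ge0; set D := _ - _.
have uu := dotxx_ge0 u; have vv := dotxx_ge0 v.
have [u0|upos] := eqVneq (dot u u) 0.
  have [v0|vpos] := eqVneq (dot v v) 0.
    have := quad 1 1; have := quad 1 (-1).
    by rewrite /D u0 v0; nra.
  have : 0 <= dot v v * D by have := quad (dot v v) (- dot u v); rewrite /D; lra.
  by rewrite pmulr_rge0 // lt_def vpos.
have : 0 <= dot u u * D by have := quad (- dot u v) (dot u u); rewrite /D; lra.
by rewrite pmulr_rge0 // lt_def upos.
Qed.

Lemma cauchy_schwarz u v : dot u v <= enorm u * enorm v.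
Proof.
rewrite /enorm -sqrtrM ?dotxx_ge0 //; apply: le_trans (ler_norm _) _.
by rewrite -sqrtr_sqr ler_sqrt ?mulr_ge0 ?dotxx_ge0 // cauchy_schwarz_sqr.
Qed.

End EuclideanNorm.

Section RealInequalities.
Variable R : realFieldType.

Lemma ler_of_le_add_small (x y k : R) : 0 <= k ->
  (forall t, 0 < t < 1 -> x <= y + t * k) -> x <= y.
Proof.
move=> k0 xle; apply/ler_addgt0Pr => e e0.
pose t := Num.min (2^-1) (e / (k + 1)).
have t0 : 0 < t by rewrite lt_min invr_gt0 ltr0n divr_gt0 //; lra.
have t1 : t < 1 by rewrite gt_min; apply/orP; left; lra.
have tk : t * (k + 1) <= e by rewrite -ler_pdivlMr ?ge_min ?lexx ?orbT //; lra.
apply: le_trans (xle t _) _; first by rewrite t0 t1.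
rewrite lerD2l; nra.
Qed.

Lemma young_lin_sqr (L r mu : R) : 0 < mu ->
  L * r <= mu * L ^+ 2 / 2 + (2 * mu)^-1 * r ^+ 2.
Proof.
move=> mu0; have mu2 : 0 < 2 * mu by rewrite mulr_gt0.
rewrite -(ler_pM2l mu2) mulrDr mulVKf ?gt_eqF //.
have := sqr_ge0 (r - mu * L); nra.
Qed.

Lemma le_mul_of_cross_sqr (g1 g2 a b : R) : 0 < g1 <= g2 -> 0 <= a -> 0 <= b ->
  g2 * a ^+ 2 + g1 * b ^+ 2 <= (g1 + g2) * (a * b) -> g1 * b <= g2 * a.
Proof.
move=> /andP[g10 g12] a0 b0 cross; rewrite leNgt; apply/negP => lt.
have ab : a < b.
  by rewrite -(ltr_pM2l g10); apply: le_lt_trans lt; rewrite ler_wpM2r.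
have : 0 < (b - a) * (g1 * b - g2 * a) by rewrite mulr_gt0 // subr_gt0.
nra.
Qed.

Lemma smoothing_sqr_le_drop (mu mumax w1 w2 beta c gam rb r : R) :
  0 < mu <= mumax -> 0 <= w1 -> 0 < w2 -> 0 < beta -> 0 < c ->
  beta / (w1 + w2 / mu) <= gam -> 0 <= rb <= r ->
  mu * rb ^+ 2 <= (w1 * mumax + w2) / beta / c * (c * gam * r ^+ 2).
Proof.
move=> /andP[mu0 mumax_ge] w10 w20 beta0 c0 gam_ge /andP[rb0 rb_le].
have w0 : 0 < w1 + w2 / mu by rewrite ltr_wpDl // divr_gt0.
rewrite ler_pdivrMr // in gam_ge.
have gam0 : 0 <= gam.
  by rewrite -(pmulr_lge0 _ w0); apply: le_trans gam_ge; apply: ltW.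
have mu_le : mu <= gam * (w1 * mumax + w2) / beta.
  have : beta * mu <= gam * (w1 * mu + w2).
    have -> : gam * (w1 * mu + w2) = gam * (w1 + w2 / mu) * mu by field; rewrite gt_eqF.
    by rewrite ler_pM2r.
  rewrite ler_pdivlMr //.
  have : w1 * mu <= w1 * mumax by rewrite ler_wpM2l.
  nra.
have -> : (w1 * mumax + w2) / beta / c * (c * gam * r ^+ 2)
    = gam * (w1 * mumax + w2) / beta * r ^+ 2 by field; rewrite !gt_eqF.
by rewrite ler_pM ?sqr_ge0 ?(ltW mu0) // ler_pXn2r // nnegrE (le_trans rb0).
Qed.

Lemma sum_decrease_le (W T : nat -> R) m n : (m <= n)%N ->
  (forall k, (m <= k < n)%N -> W k.+1 <= W k - T k) ->
  \sum_(m <= k < n) T k <= W m - W n.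
Proof.
move=> mn Wdec; rewrite -opprB -telescope_sumr // -sumrN big_nat [X in _ <= X]big_nat.
by apply: ler_sum => k /Wdec; rewrite opprB; lra.
Qed.

Lemma sum_decrease_window_le (W T : nat -> R) (Wmin : R) m kl n :
  (m <= kl <= n)%N -> (forall k, (m <= k)%N -> W k.+1 <= W k - T k) ->
  (forall k, (m <= k)%N -> 0 <= T k) -> (forall k, (m <= k)%N -> Wmin <= W k) ->
  \sum_(kl <= k < n) T k <= W m - Wmin.
Proof.
move=> /andP[mkl kln] Wdec T_ge0 W_ge.
have head : \sum_(m <= k < kl) T k <= W m - W kl.
  by apply: sum_decrease_le => // k /andP[mk _]; apply: Wdec.
have window : \sum_(kl <= k < n) T k <= W kl - W n.
  by apply: sum_decrease_le => // k /andP[klk _]; apply: Wdec (leq_trans mkl klk).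
have head_ge0 : 0 <= \sum_(m <= k < kl) T k.
  by rewrite big_nat; apply: sumr_ge0 => k /andP[mk _]; apply: T_ge0.
have := W_ge n (leq_trans mkl kln); lra.
Qed.

End RealInequalities.

Lemma bigmin_le_sqrt_weighted (R : rcfType) (mu r : nat -> R) (chi : R) kl ku :
  (kl <= ku)%N -> (forall n, (kl <= n <= ku)%N -> 0 < mu n) ->
  \sum_(kl <= n < ku.+1) mu n * r n ^+ 2 <= chi ->
  \big[Num.min/r kl]_(kl <= n < ku.+1) r n
    <= Num.sqrt (chi / \sum_(kl <= n < ku.+1) mu n).
Proof.
move=> klku mu0 sum_le; set m := \big[_/_]_(_ <= _ < _) _.
have [m_le0|m_gt0] := leP m 0; first by apply: le_trans m_le0 (sqrtr_ge0 _).
have mu_ge0 n : (kl <= n < ku.+1)%N -> 0 <= mu n by move=> kln; rewrite ltW ?mu0.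
have sum_gt0 : 0 < \sum_(kl <= n < ku.+1) mu n.
  have tail_ge0 : 0 <= \sum_(kl.+1 <= n < ku.+1) mu n.
    by rewrite big_nat; apply: sumr_ge0 => n /andP[/ltnW kln nku]; rewrite mu_ge0 ?kln.
  by rewrite big_ltn // ltr_wpDr // mu0 // leqnn.
have : m ^+ 2 * \sum_(kl <= n < ku.+1) mu n <= chi.
  apply: le_trans sum_le; rewrite mulr_sumr !big_nat; apply: ler_sum => n kln.
  have m_le : m <= r n by apply: ge_bigmin_seq; rewrite // mem_index_iota.
  rewrite mulrC ler_wpM2l ?mu_ge0 // ler_pXn2r // nnegrE ltW //.
  exact: lt_le_trans m_le.
rewrite -(ler_pdivlMr _ _ sum_gt0) => m2_le.
by rewrite -(ger0_norm (ltW m_gt0)) -sqrtr_sqr ler_sqrt // (le_trans _ m2_le) ?sqr_ge0.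
Qed.

Section ProximalMap.
Variables (R : realType) (d : nat) (phi : 'rV[R]_d -> \bar R).
Hypothesis phi_proper : proper_fun phi.

Lemma is_prox_fin_num gam z p : is_prox phi gam z p -> phi p \is a fin_num.
Proof.
case: phi_proper => phi_neq_ninfty [y y_fin] /(_ y).
rewrite fin_numE phi_neq_ninfty /=; move: y_fin.
by case: (phi y) => // r _; case: (phi p).
Qed.

Hypothesis phi_convex : econvex_fun phi.

(* Compare the prox objective at p and at p + t (u - p), then let t tend to 0. *)
Lemma prox_variational_ineq gam z p u : 0 < gam -> is_prox phi gam z p ->
  phi u \is a fin_num -> dot (z - p) (u - p) <= gam * (fine (phi u) - fine (phi p)).
Proof.
move=> gam0 prox_p u_fin; have p_fin := is_prox_fin_num prox_p.
set a := fine (phi p); set b := fine (phi u).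
set P := dot (p - z) (p - z); set Q := dot (p - z) (u - p); set K := dot (u - p) (u - p).
have -> : dot (z - p) (u - p) = - Q by rewrite /Q -opprB -scaleN1r dotZl mulN1r.
apply: (@ler_of_le_add_small _ _ _ (K / 2)); first by rewrite divr_ge0 ?dotxx_ge0.
move=> t t01; have /andP[t0 _] := t01; pose pt := t *: u + (1 - t) *: p.
have := phi_convex u p t01.
rewrite -(fineK u_fin) -(fineK p_fin) -!EFinM -EFinD -/pt => conv.
have pt_fin : phi pt \is a fin_num.
  case: phi_proper => phi_neq_ninfty _; rewrite fin_numE phi_neq_ninfty /=.
  by move: conv; case: (phi pt).
rewrite -(fineK pt_fin) lee_fin -/a -/b in conv.
have := prox_p pt; rewrite -(fineK pt_fin) -(fineK p_fin) -!EFinD lee_fin -/a.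
have -> : pt - z = (p - z) + t *: (u - p) by apply/rowP => i; rewrite !mxE; ring.
rewrite !sqr_enorm (dot_sqrD (p - z)) dotZl !dotZr -/P -/Q -/K => opt.
have half : gam * (2 * gam)^-1 = 2^-1 by rewrite invfM mulrCA mulfV ?gt_eqF // mulr1.
have := ler_wpM2l (ltW gam0) opt; rewrite !mulrDr !mulrA half => opt'.
rewrite -(ler_pM2l t0); nra.
Qed.

Lemma residual_nonincreasing (prox : R -> 'rV[R]_d -> 'rV[R]_d)
    (gradF : 'rV[R]_d -> 'rV[R]_d) g1 g2 x :
  (forall gam z, 0 < gam -> is_prox phi gam z (prox gam z)) ->
  0 < g1 -> g1 <= g2 -> residual prox gradF g2 x <= residual prox gradF g1 x.
Proof.
move=> proxP g10 g12; have g20 := lt_le_trans g10 g12.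
rewrite /residual; set v := gradF x.
set p1 := prox g1 (x - g1 *: v); set p2 := prox g2 (x - g2 *: v).
have prox1 : is_prox phi g1 (x - g1 *: v) p1 by apply: proxP.
have prox2 : is_prox phi g2 (x - g2 *: v) p2 by apply: proxP.
have vi1 := prox_variational_ineq g10 prox1 (is_prox_fin_num prox2).
have vi2 := prox_variational_ineq g20 prox2 (is_prox_fin_num prox1).
set a := x - p1 in vi1 vi2 *; set b := x - p2 in vi1 vi2 *.
have e1 : x - g1 *: v - p1 = a - g1 *: v by apply/rowP => i; rewrite !mxE; ring.
have e2 : x - g2 *: v - p2 = b - g2 *: v by apply/rowP => i; rewrite !mxE; ring.
have e3 : p2 - p1 = a - b by apply/rowP => i; rewrite !mxE; ring.
have e4 : p1 - p2 = b - a by apply/rowP => i; rewrite !mxE; ring.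
rewrite e1 e3 in vi1; rewrite e2 e4 in vi2.
clearbody a b; rewrite !dotBl !dotBr !dotZl in vi1 vi2; rewrite (dotC b a) in vi2.
have cross : g2 * enorm a ^+ 2 + g1 * enorm b ^+ 2 <= (g1 + g2) * (enorm a * enorm b).
  have := cauchy_schwarz a b; rewrite !sqr_enorm.
  have := ler_wpM2l (ltW g20) vi1; have := ler_wpM2l (ltW g10) vi2; nra.
rewrite !enormZ !ger0_norm ?invr_ge0 ?(ltW g10) ?(ltW g20) // ler_pdivrMl // mulrCA ler_pdivlMl //.
by apply: le_mul_of_cross_sqr; rewrite ?g10 ?enorm_ge0.
Qed.

End ProximalMap.

Section MoreauEnvelope.
Variables (R : realType) (e : nat) (g : 'rV[R]_e -> R) (Lg : R).
Hypothesis g_lip : forall z z', `|g z - g z'| <= Lg * enorm (z - z').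

Lemma lipschitz_le z zb : g zb <= g z + Lg * enorm (z - zb).
Proof.
have := g_lip zb z; have := ler_norm (g zb - g z); rewrite enorm_distC; lra.
Qed.

Lemma moreau_lbound mu zb : 0 < mu ->
  lbound (range (fun z => g z + (2 * mu)^-1 * enorm (z - zb) ^+ 2))
         (g zb - mu * Lg ^+ 2 / 2).
Proof.
move=> mu0 _ [z _ <-]; have := lipschitz_le z zb.
have := young_lin_sqr Lg (enorm (z - zb)) mu0; lra.
Qed.

Lemma moreau_ge mu zb : 0 < mu -> g zb - mu * Lg ^+ 2 / 2 <= moreau g mu zb.
Proof.
move=> mu0; apply: lb_le_inf; last exact: moreau_lbound.
by exists (g zb + (2 * mu)^-1 * enorm (zb - zb) ^+ 2), zb.
Qed.

Lemma moreau_le mu zb z : 0 < mu ->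
  moreau g mu zb <= g z + (2 * mu)^-1 * enorm (z - zb) ^+ 2.
Proof.
move=> mu0; apply: ge_inf; last by exists z.
by exists (g zb - mu * Lg ^+ 2 / 2); exact: moreau_lbound.
Qed.

(* Within distance 2 mu Lg of zb, passing to the smaller parameter costs at
   most the extra term; farther out the quadratic term dominates the Lipschitz
   growth of g, so zb itself is a better candidate. *)
Lemma moreau_shrink_le mu mu' zb : 0 < mu' -> mu' <= mu ->
  moreau g mu' zb <= moreau g mu zb + 2 * Lg ^+ 2 * mu * (mu - mu') / mu'.
Proof.
move=> mu'0 mu'_le; have mu0 := lt_le_trans mu'0 mu'_le.
set D := 2 * Lg ^+ 2 * mu * (mu - mu') / mu'.
have w_ge0 : 0 <= (mu - mu') / (2 * mu * mu').
  by rewrite divr_ge0 ?subr_ge0 // ltW // !mulr_gt0.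
have D_ge0 : 0 <= D.
  have -> : D = (2 * mu * Lg) ^+ 2 * ((mu - mu') / (2 * mu * mu')).
    by rewrite /D; field; rewrite !gt_eqF.
  by rewrite mulr_ge0 ?sqr_ge0.
rewrite -lerBlDr; apply: lb_le_inf.
  by exists (g zb + (2 * mu)^-1 * enorm (zb - zb) ^+ 2), zb.
move=> _ [z _ <-]; rewrite lerBlDr; set r := enorm (z - zb).
have r_ge0 : 0 <= r by apply: enorm_ge0.
have [r_le|r_gt] := leP r (2 * mu * Lg).
  apply: le_trans (moreau_le zb z mu'0) _; rewrite -/r -addrA lerD2l.
  have -> : (2 * mu')^-1 * r ^+ 2 = (2 * mu)^-1 * r ^+ 2 + r ^+ 2 * ((mu - mu') / (2 * mu * mu')).
    by field; rewrite !gt_eqF.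
  have -> : D = (2 * mu * Lg) ^+ 2 * ((mu - mu') / (2 * mu * mu')).
    by rewrite /D; field; rewrite !gt_eqF.
  by rewrite lerD2l ler_wpM2r // ler_pXn2r // nnegrE (le_trans r_ge0).
apply: le_trans (moreau_le zb zb mu'0) _.
rewrite subrr enorm0 expr0n /= mulr0 addr0.
apply: le_trans (lipschitz_le z zb) _; rewrite -/r -addrA lerD2l.
have : Lg * r * (2 * mu) <= r ^+ 2.
  have : 0 <= r * (r - 2 * mu * Lg) by rewrite mulr_ge0 // subr_ge0 ltW.
  lra.
rewrite -ler_pdivlMr ?mulr_gt0 // mulrC; lra.
Qed.

End MoreauEnvelope.

Section ProxGradientMerit.
Variables (R : realType) (dx dz : nat).
Variables (phi : 'rV[R]_dx -> \bar R) (h : 'rV[R]_dx -> R).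
Variables (S : 'rV[R]_dx -> 'rV[R]_dz) (g : 'rV[R]_dz -> R) (Lg M : R).
Variables (mu : nat -> R) (x : nat -> 'rV[R]_dx).
Hypothesis g_lip : forall z z', `|g z - g z'| <= Lg * enorm (z - z').
Hypothesis phi_fin : forall n, (1 <= n)%N -> phi (x n) \is a fin_num.
Hypothesis mu_gt0 : forall n, (1 <= n)%N -> 0 < mu n.
Hypothesis M_gt0 : 0 < M.

(* The Lyapunov function F_n(x_n) + phi(x_n) + 2 Lg^2 M mu_n: the last term
   pays for the increase of the Moreau envelope as the smoothing shrinks. *)
Definition merit n :=
  h (x n) + moreau g (mu n) (S (x n)) + fine (phi (x n)) + 2 * Lg ^+ 2 * M * mu n.

Lemma merit_descent (T : nat -> R) n : (1 <= n)%N ->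
  M^-1 <= mu n.+1 / mu n <= 1 ->
  ((h (x n.+1) + moreau g (mu n) (S (x n.+1)))%:E + phi (x n.+1)
    <= (h (x n) + moreau g (mu n) (S (x n)))%:E + phi (x n) - (T n)%:E)%E ->
  merit n.+1 <= merit n - T n.
Proof.
move=> n1 /andP[ratio_ge ratio_le].
rewrite -(fineK (phi_fin n1)) -(fineK (phi_fin (ltn0Sn n))) -!EFinD lee_fin => desc.
have mun := mu_gt0 n1; have muSn := mu_gt0 (ltn0Sn n).
have mu_le : mu n.+1 <= mu n by rewrite ler_pdivrMr // mul1r in ratio_le.
have ratio : mu n / mu n.+1 <= M.
  by rewrite -invf_div -[M]invrK lef_pV2 ?posrE ?invr_gt0 ?divr_gt0.
have := moreau_shrink_le g_lip (S (x n.+1)) muSn mu_le.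
have : 2 * Lg ^+ 2 * mu n * (mu n - mu n.+1) / mu n.+1
         <= 2 * Lg ^+ 2 * M * (mu n - mu n.+1).
  have -> : 2 * Lg ^+ 2 * mu n * (mu n - mu n.+1) / mu n.+1
      = 2 * Lg ^+ 2 * (mu n - mu n.+1) * (mu n / mu n.+1) by ring.
  have -> : 2 * Lg ^+ 2 * M * (mu n - mu n.+1) = 2 * Lg ^+ 2 * (mu n - mu n.+1) * M.
    by rewrite mulrAC.
  by rewrite ler_wpM2l // mulr_ge0 ?subr_ge0 // mulr_ge0 ?sqr_ge0.
rewrite /merit; lra.
Qed.

Hypothesis phi_proper : proper_fun phi.

Lemma merit_ge xs mumax n : (1 <= n)%N -> mu n <= mumax ->
  (forall y, ((h xs + g (S xs))%:E + phi xs <= (h y + g (S y))%:E + phi y)%E) ->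
  h xs + g (S xs) + fine (phi xs) - mumax * Lg ^+ 2 / 2 <= merit n.
Proof.
move=> n1 mu_le xs_min.
have xs_fin : phi xs \is a fin_num.
  case: phi_proper => phi_neq_ninfty _; rewrite fin_numE phi_neq_ninfty /=.
  by move: (xs_min (x n)); rewrite -(fineK (phi_fin n1)); case: (phi xs).
have := xs_min (x n); rewrite -(fineK xs_fin) -(fineK (phi_fin n1)) -!EFinD lee_fin => min_le.
have := moreau_ge g_lip (S (x n)) (mu_gt0 n1).
have : mu n * Lg ^+ 2 <= mumax * Lg ^+ 2 by rewrite ler_wpM2r ?sqr_ge0.
have : 0 <= 2 * Lg ^+ 2 * M * mu n
  by rewrite mulr_ge0 ?(ltW (mu_gt0 n1)) // mulr_ge0 ?(ltW M_gt0) // mulr_ge0 ?sqr_ge0.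
rewrite /merit; lra.
Qed.

End ProxGradientMerit.

Theorem theorem2 (R : realType) (dx dz : nat)
  (phi : 'rV[R]_dx -> \bar R) (h : 'rV[R]_dx -> R) (gradh : 'rV[R]_dx -> 'rV[R]_dx)
  (S : 'rV[R]_dx -> 'rV[R]_dz) (g : 'rV[R]_dz -> R) (Lg eta : R)
  (prox : R -> 'rV[R]_dx -> 'rV[R]_dx)
  (mu : nat -> R) (gradF : nat -> 'rV[R]_dx -> 'rV[R]_dx)
  (gamma : nat -> R) (x : nat -> 'rV[R]_dx)
  (c M varpi1 varpi2 beta gammabar : R) :
  proper_fun phi -> lsc_fun phi -> econvex_fun phi ->
  is_gradient h gradh ->
  (exists Lh, grad_lipschitz_on (edom phi) gradh Lh) ->
  C1 S ->
  0 < Lg -> (forall z z', `|g z - g z'| <= Lg * enorm (z - z')) ->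
  0 < eta -> convex_fun (fun z => g z + eta / 2 * enorm z ^+ 2) ->
  (exists xs, forall y,
      ((h xs + g (S xs))%:E + phi xs <= (h y + g (S y))%:E + phi y)%E) ->
  (forall gam xbar, 0 < gam -> is_prox phi gam xbar (prox gam xbar)) ->
  edom phi (x 1%N) ->
  0 < c < 1 ->
  (* (a) *)
  (forall n, (1 <= n)%N -> 0 < mu n <= (2 * eta)^-1) ->
  mu @ \oo --> 0 ->
  (forall B : R, exists N, B < \sum_(1 <= k < N) mu k) ->
  1 <= M ->
  (forall n, (1 <= n)%N -> M^-1 <= mu n.+1 / mu n <= 1) ->
  (* (b) *)
  (forall n, (1 <= n)%N ->
     is_gradient (fun y => h y + moreau g (mu n) (S y)) (gradF n)) ->
  0 <= varpi1 -> 0 < varpi2 ->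
  (forall n, (1 <= n)%N ->
     grad_lipschitz_on (edom phi) (gradF n) (varpi1 + varpi2 / mu n)) ->
  (* (c) *)
  (forall n, (1 <= n)%N ->
     ((h (prox (gamma n) ((x n - gamma n *: gradF n (x n))%R))
        + moreau g (mu n) (S (prox (gamma n) ((x n - gamma n *: gradF n (x n))%R))))%:E
      + phi (prox (gamma n) ((x n - gamma n *: gradF n (x n))%R))
      <= (h (x n) + moreau g (mu n) (S (x n)))%:E + phi (x n)
         - (c * gamma n * residual prox (gradF n) (gamma n) (x n) ^+ 2)%:E)%E) ->
  0 < beta -> 0 < gammabar ->
  (forall n, (1 <= n)%N -> 0 < gamma n /\
     beta / (varpi1 + varpi2 / mu n) <= gamma n <= gammabar) ->
  (* (d) *)
  (forall n, (1 <= n)%N -> x n.+1 = prox (gamma n) ((x n - gamma n *: gradF n (x n))%R)) ->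
  exists chi : R, 0 < chi /\
    forall kl ku : nat, (1 <= kl)%N -> (kl <= ku)%N ->
      \big[Num.min/residual prox (gradF kl) gammabar (x kl)]_(kl <= n < ku.+1)
          residual prox (gradF n) gammabar (x n)
      <= Num.sqrt (chi / \sum_(kl <= n < ku.+1) mu n).
Proof.
move=> phi_proper _ phi_convex _ _ _ _ g_lip eta_gt0 _ [xs xs_min] proxP x1_fin /andP[c_gt0 _]
  mu_bnd _ _ M_ge1 mu_ratio _ w1_ge0 w2_gt0 _ descent beta_gt0 _ gamma_bnd xS.
have mu_gt0 n : (1 <= n)%N -> 0 < mu n by case/mu_bnd/andP.
have gamma_gt0 n : (1 <= n)%N -> 0 < gamma n by case/gamma_bnd.
have M_gt0 : 0 < M by apply: lt_le_trans M_ge1.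
have x_fin n : (1 <= n)%N -> phi (x n) \is a fin_num.
  case: n => [|[_|n _]] //; rewrite xS //.
  exact/(is_prox_fin_num phi_proper)/proxP/gamma_gt0.
pose W := merit phi h S g Lg M mu x.
pose T n := c * gamma n * residual prox (gradF n) (gamma n) (x n) ^+ 2.
pose Wmin := h xs + g (S xs) + fine (phi xs) - (2 * eta)^-1 * Lg ^+ 2 / 2.
have W_desc n : (1 <= n)%N -> W n.+1 <= W n - T n.
  by move=> n1; apply: merit_descent; rewrite ?xS ?mu_ratio ?descent.
have W_ge n : (1 <= n)%N -> Wmin <= W n.
  by move=> n1; apply: merit_ge => //; case/andP: (mu_bnd n n1).
have T_ge0 n : (1 <= n)%N -> 0 <= T n.
  by move=> n1; apply: mulr_ge0 (sqr_ge0 _); rewrite mulr_ge0 ?ltW ?gamma_gt0.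
pose K := (varpi1 * (2 * eta)^-1 + varpi2) / beta / c.
have K_ge0 : 0 <= K.
  have eta_inv : 0 <= (2 * eta)^-1 by rewrite invr_ge0 mulr_ge0 // ltW.
  apply: divr_ge0 (ltW c_gt0); apply: divr_ge0 (ltW beta_gt0).
  by rewrite addr_ge0 ?mulr_ge0 // ltW.
exists (K * (W 1%N - Wmin) + 1); split.
  by rewrite ltr_wpDl // mulr_ge0 // subr_ge0 W_ge.
move=> kl ku kl1 klku; apply: bigmin_le_sqrt_weighted => //.
  by move=> n /andP[kln _]; apply: mu_gt0 (leq_trans kl1 kln).
apply: le_trans (_ : K * \sum_(kl <= n < ku.+1) T n <= _); last first.
  have : \sum_(kl <= n < ku.+1) T n <= W 1%N - Wmin.
    by apply: sum_decrease_window_le => //; rewrite kl1 leqW.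
  by move/(ler_wpM2l K_ge0); lra.
rewrite mulr_sumr !big_nat; apply: ler_sum => n /andP[kln _].
have n1 := leq_trans kl1 kln; have [gam_gt0 /andP[gam_ge gam_le]] := gamma_bnd n n1.
apply: (smoothing_sqr_le_drop (mu_bnd n n1) w1_ge0 w2_gt0 beta_gt0 c_gt0 gam_ge).
apply/andP; split; first exact: enorm_ge0.
by have := residual_nonincreasing phi_proper phi_convex (gradF n) (x n) proxP gam_gt0 gam_le.
Qed.
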